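(* Let $G$ be a graph with at least one isolated vertex such that $G\ne\widetilde G$ (i.e., $G$ has a pair of distinct twins). Then for every $t\ge 1$, \[\mu_t(\widetilde G)\cong \widetilde{\mu_t(G)}+(t-1)K_1.\]
   Context: All graphs are finite and simple. For a graph $G$ with $V(G)=\{v_1,\dots,v_n\}$ and an integer $t\ge1$, the generalized Mycielskian $\mu_t(G)$ has vertex set $\{u_i^s: 1\le i\le n,\ 0\le s\le t\}\cup\{w\}$, where $u_i^0$ is identified with $v_i$. Its edges are: $u_i^0u_j^0$ for each edge $v_iv_j$ of $G$; $u_i^su_j^{s+1}$ and $u_j^su_i^{s+1}$ for each edge $v_iv_j$ of $G$ and each $0\le s<t$; and $u_i^tw$ for all $1\le i\le n$. Two vertices are twins if they have the same open neighborhood; being twins is an equivalence relation $\sim$ on $V(G)$. The twin quotient $\widetilde G$ has as vertices the equivalence classes $[x]$ of $\sim$, with $[x]$ adjacent to $[z]$ iff some $p\in[x]$ and $q\in[z]$ are adjacent in $G$. $+$ denotes disjoint union and $(t-1)K_1$ denotes $t-1$ isolated vertices. *)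

(* Finite simple graphs as symmetric irreflexive relations on a finType. *)
From mathcomp Require Import all_boot.
Set Implicit Arguments. Unset Strict Implicit. Unset Printing Implicit Defensive.

Definition graph_iso (A B : finType) (eA : rel A) (eB : rel B) : Prop :=
  exists f : A -> B, bijective f /\ forall x y, eB (f x) (f y) = eA x y.

Definition nbhd (T : finType) (e : rel T) (x : T) : {set T} := [set y | e x y].

Definition twins (T : finType) (e : rel T) (x y : T) : bool := nbhd e x == nbhd e y.

Definition twin_class (T : finType) (e : rel T) (x : T) : {set T} :=
  [set y | twins e x y].

Definition is_twin_class (T : finType) (e : rel T) (A : {set T}) : bool :=
  [exists x, A == twin_class e x].

Definition twinq (T : finType) (e : rel T) : finType := {A : {set T} | is_twin_class e A}.

Definition twinq_rel (T : finType) (e : rel T) : rel (twinq e) :=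
  fun A B => [exists p in val A, exists q in val B, e p q].

(* Generalized Mycielskian mu_t(G): vertices u_i^s = Some (v_i, s), s <= t, and w = None. *)
Definition myc (T : finType) (t : nat) : finType := option (T * 'I_t.+1).

Definition myc_rel (T : finType) (e : rel T) (t : nat) : rel (myc T t) :=
  fun a b =>
    match a, b with
    | Some (i, s), Some (j, s') =>
        e i j && [|| (val s == 0) && (val s' == 0),
                     val s' == (val s).+1 | val s == (val s').+1]
    | Some (_, s), None => val s == t
    | None, Some (_, s') => val s' == t
    | None, None => false
    end.

Definition add_isolated (T : finType) (e : rel T) (k : nat) : rel (T + 'I_k)%type :=
  fun a b =>
    match a, b with
    | inl x, inl y => e x y
    | _, _ => false
    end.

Arguments twinq_rel {T} e _ _.
Arguments myc_rel {T} e t _ _.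
Arguments add_isolated {T} e k _ _.

From mathcomp Require Import all_boot zify.
Set Implicit Arguments. Unset Strict Implicit. Unset Printing Implicit Defensive.

(* Write [x] for twin classes.  The isomorphism sends u_A^s to [u_{rep A}^s] and w
   to [w], except for the "collapsed" vertices u_A^s with A the isolated class of G~
   and 0 < s < t, which go to the (s-1)-th isolated vertex.  In mu_t(G) the isolated
   vertices of G at the levels 0 .. t-1 are all isolated, hence pairwise twins, so
   they form a single class: this is where the t-1 extra isolated vertices come from.

   Finally the map above is shown to
   preserve edges, to be injective and to be surjective. *)

Lemma inj_surj_bij (A B : finType) (f : A -> B) :
  injective f -> (forall y, exists x, f x = y) -> bijective f.
Proof.
move=> f_inj f_surj; apply: inj_card_bij => //.
rewrite -(card_codom f_inj); apply/subset_leq_card/subsetP => y _; apply/codomP.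
by have [x <-] := f_surj y; exists x.
Qed.

Definition isolated (U : finType) (r : rel U) (x : U) : bool := [forall y, ~~ r x y].

Section Twins.

Variables (U : finType) (r : rel U).

Lemma twinsP x y : reflect (forall z, r x z = r y z) (twins r x y).
Proof.
apply: (iffP eqP) => [same z | same].
- by have := congr1 (fun S : {set U} => z \in S) same; rewrite /nbhd !inE.
- by apply/setP => z; rewrite /nbhd !inE.
Qed.

Lemma twins_refl x : twins r x x.
Proof. by apply/twinsP. Qed.

Lemma twins_sym x y : twins r x y -> twins r y x.
Proof. by move/twinsP => same; apply/twinsP => z; rewrite same. Qed.

Lemma twins_trans x y z : twins r x y -> twins r y z -> twins r x z.
Proof. by move=> /twinsP xy /twinsP yz; apply/twinsP => w; rewrite xy yz. Qed.

Lemma isolatedPn x : reflect (exists y, r x y) (~~ isolated r x).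
Proof.
rewrite negb_forall; apply: (iffP existsP) => [[y]|[y xy]]; first by rewrite negbK; exists y.
by exists y; rewrite negbK.
Qed.

Lemma isolated_rel x y : isolated r x -> r x y = false.
Proof. by move/forallP/(_ y)/negbTE. Qed.

Lemma isolated_twins x y : isolated r x -> isolated r y -> twins r x y.
Proof. by move=> ix iy; apply/twinsP => z; rewrite !isolated_rel. Qed.

End Twins.

Section TwinQuotient.

Variables (U : finType) (r : rel U).

Lemma twin_class_is_class x : is_twin_class r (twin_class r x).
Proof. by apply/existsP; exists x. Qed.

Definition cls (x : U) : twinq r := exist _ (twin_class r x) (twin_class_is_class x).

Definition rep (A : twinq r) : U := xchoose (existsP (svalP A)).

Lemma cls_rep A : cls (rep A) = A.
Proof. by apply: val_inj; apply/esym/eqP; exact: (xchooseP (existsP (svalP A))). Qed.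

Lemma cls_eq x y : cls x = cls y <-> twins r x y.
Proof.
split => [/(congr1 val) /= xy | xy].
- have : y \in twin_class r y by rewrite inE twins_refl.
  by rewrite -xy inE.
- apply: val_inj; apply/setP => z; rewrite !inE.
  by apply/idP/idP => [|yz]; [apply: twins_trans; apply: twins_sym | apply: twins_trans yz].
Qed.

Lemma twins_rep_cls x : twins r (rep (cls x)) x.
Proof. by apply/cls_eq; rewrite cls_rep. Qed.

Lemma rep_twins_eq A B : twins r (rep A) (rep B) -> A = B.
Proof. by move/cls_eq; rewrite !cls_rep. Qed.

Hypothesis r_sym : symmetric r.

Lemma twinq_rel_cls x y : twinq_rel r (cls x) (cls y) = r x y.
Proof.
apply/idP/idP => [| xy].
- case/existsP => p /andP [/= + /existsP [q /andP [/= + pq]]].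
  rewrite !inE => /twinsP xp /twinsP yq.
  by rewrite xp r_sym yq r_sym.
- by apply/existsP; exists x; rewrite inE twins_refl; apply/existsP; exists y;
    rewrite inE twins_refl.
Qed.

Lemma twinq_rel_rep A B : twinq_rel r A B = r (rep A) (rep B).
Proof. by rewrite -{1}(cls_rep A) -{1}(cls_rep B) twinq_rel_cls. Qed.

Lemma twinq_sym : symmetric (twinq_rel r).
Proof. by move=> A B; rewrite !twinq_rel_rep r_sym. Qed.

Lemma twinq_twin_free A B : twins (twinq_rel r) A B -> A = B.
Proof.
move/twinsP => same; apply: rep_twins_eq; apply/twinsP => z.
by have := same (cls z); rewrite -{1}(cls_rep A) -{1}(cls_rep B) !twinq_rel_cls.
Qed.

Lemma isolated_cls x : isolated (twinq_rel r) (cls x) = isolated r x.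
Proof.
apply/forallP/forallP => [iso y | iso B]; first by have := iso (cls y); rewrite twinq_rel_cls.
by rewrite -(cls_rep B) twinq_rel_cls.
Qed.

Lemma isolated_rep A : isolated (twinq_rel r) A = isolated r (rep A).
Proof. by rewrite -{1}(cls_rep A) isolated_cls. Qed.

End TwinQuotient.

Definition ladj (m n : nat) : bool := [|| (m == 0) && (n == 0), n == m.+1 | m == n.+1].

Lemma ladj_neighbour t m : m <= t -> 1 <= t -> exists2 n, n <= t & ladj m n.
Proof. by move=> mt t1; exists (if m < t then m.+1 else m.-1); case: ltnP; rewrite /ladj; lia. Qed.

Lemma ladj_inj t m n : m <= t -> n <= t -> (m == t) = (n == t) ->
  (forall k, k <= t -> ladj m k = ladj n k) -> m = n.
Proof.
move=> mt nt top same; case: (ltnP m t) => [ltmt | ?]; last lia.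
have ltnt : n < t by lia.
by move: (same m.+1 ltmt) (same n.+1 ltnt); rewrite /ladj; lia.
Qed.

Section Mycielskian.

Variables (U : finType) (r : rel U) (t : nat).

Lemma myc_rel_levels x y (s s' : 'I_t.+1) :
  myc_rel r t (Some (x, s)) (Some (y, s')) = r x y && ladj s s'.
Proof. by []. Qed.

Lemma myc_sym : symmetric r -> symmetric (myc_rel r t).
Proof. by move=> r_sym [[x s]|] [[y s']|] //=; rewrite r_sym /ladj; congr (_ && _); lia. Qed.

Definition myc_map (V : finType) (h : U -> V) (a : myc U t) : myc V t :=
  omap (fun p => (h p.1, p.2)) a.

Lemma myc_map_rel (V : finType) (r' : rel V) (h : U -> V) :
  (forall x y, r' (h x) (h y) = r x y) ->
  forall a b, myc_rel r' t (myc_map h a) (myc_map h b) = myc_rel r t a b.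
Proof. by move=> hom [[x s]|] [[y s']|] //=; rewrite hom. Qed.

Lemma myc_twins_lift x y s : twins r x y -> twins (myc_rel r t) (Some (x, s)) (Some (y, s)).
Proof. by move/twinsP => same; apply/twinsP => [[[z n]|]] //=; rewrite same. Qed.

Lemma myc_isolated x (s : 'I_t.+1) :
  isolated r x -> s < t -> isolated (myc_rel r t) (Some (x, s)).
Proof.
move=> iso st; apply/forallP => [[[y n]|]] /=; first by rewrite (isolated_rel y iso).
by rewrite neq_ltn st.
Qed.

(* The hub w is adjacent to the top copy of an isolated vertex z0, unlike any u_y^s. *)
Lemma myc_hub_not_twin z0 y s :
  symmetric r -> isolated r z0 -> ~~ twins (myc_rel r t) None (Some (y, s)).
Proof.
move=> r_sym iso; apply/negP => /twinsP /(_ (Some (z0, ord_max))) /=.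
by rewrite eqxx r_sym (isolated_rel y iso).
Qed.

Lemma myc_twins_top x y (s s' : 'I_t.+1) :
  twins (myc_rel r t) (Some (x, s)) (Some (y, s')) -> (s == t :> nat) = (s' == t :> nat).
Proof. by move/twinsP/(_ None). Qed.

Hypothesis t_ge1 : 1 <= t.

Lemma myc_twins_level x y (s s' : 'I_t.+1) :
  twins (myc_rel r t) (Some (x, s)) (Some (y, s')) -> ~~ isolated r x ->
  s = s' /\ twins r x y.
Proof.
move=> tw /isolatedPn [k xk].
have same z n : n <= t -> r x z && ladj s n = r y z && ladj s' n.
  by move=> nt; move/twinsP/(_ (Some (z, inord n))): (tw); rewrite !myc_rel_levels inordK.
have [n0 n0t sn0] := @ladj_neighbour t s (ltn_ord s) t_ge1.
have yk : r y k by have := same k n0 n0t; rewrite xk sn0 => /esym /andP [].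
have ss' : s = s' :> nat.
  apply: (@ladj_inj t s s' (ltn_ord s) (ltn_ord s') (myc_twins_top tw)) => n nt.
  by have := same k n nt; rewrite xk yk.
split; first exact: val_inj.
by apply/twinsP => z; have := same z n0 n0t; rewrite -ss' sn0 !andbT.
Qed.

Lemma myc_twins_inv x y (s s' : 'I_t.+1) :
  twins (myc_rel r t) (Some (x, s)) (Some (y, s')) ->
  (isolated r x /\ isolated r y) \/ (s = s' /\ twins r x y).
Proof.
move=> tw; have [ix | nix] := boolP (isolated r x); last by right; exact: myc_twins_level.
have [iy | niy] := boolP (isolated r y); first by left.
by have [-> /twins_sym] := myc_twins_level (twins_sym tw) niy; right.
Qed.

End Mycielskian.

Section Collapse.

Variables (T : finType) (e : rel T) (t : nat).

Definition lift (a : myc (twinq e) t) : myc T t := myc_map (@rep _ e) a.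

(* The copies u_A^s, 0 < s < t, of the isolated class A; they become extra K_1's. *)
Definition collapsed (a : myc (twinq e) t) : bool :=
  if a is Some (A, s) then isolated (twinq_rel e) A && (0 < s < t) else false.

Definition level (a : myc (twinq e) t) : nat := if a is Some (_, s) then val s else t.

(* The isomorphism; the fallback in the collapsed case is never used. *)
Definition collapse (a : myc (twinq e) t) : (twinq (myc_rel e t) + 'I_t.-1)%type :=
  let X := inl (cls (myc_rel e t) (lift a)) in
  if collapsed a then oapp inr X (insub (level a).-1) else X.

Variant collapse_spec (a : myc (twinq e) t) : (twinq (myc_rel e t) + 'I_t.-1)%type -> Type :=
  | CollapseIsolated (i : 'I_t.-1) of collapsed a & val i = (level a).-1 :
      collapse_spec a (inr i)
  | CollapseClass of ~~ collapsed a : collapse_spec a (inl (cls (myc_rel e t) (lift a))).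

Lemma collapseP a : collapse_spec a (collapse a).
Proof.
rewrite /collapse; case: (boolP (collapsed a)) => [ca | nca]; last exact: CollapseClass.
case: insubP => [i _ vi | ]; first exact: CollapseIsolated.
by move: ca; case: a => [[A s]|] //= /andP [_ st] /negP []; lia.
Qed.

Lemma collapse_class a : ~~ collapsed a -> collapse a = inl (cls (myc_rel e t) (lift a)).
Proof. by move=> nca; rewrite /collapse (negbTE nca). Qed.

Lemma collapsed_isolated a : collapsed a -> isolated (myc_rel (twinq_rel e) t) a.
Proof. by case: a => [[A s]|] //= /andP [iA /andP [_ st]]; apply: myc_isolated. Qed.

Hypothesis e_sym : symmetric e.

Lemma collapsed_level_inj a b :
  collapsed a -> collapsed b -> (level a).-1 = (level b).-1 -> a = b.
Proof.
case: a b => [[A s]|] [[B s']|] //= /andP [iA sa] /andP [iB sb] ls.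
rewrite (twinq_twin_free e_sym (isolated_twins iA iB)).
by have -> : s = s' by apply: val_inj => /=; lia.
Qed.

Lemma collapse_edges a b :
  add_isolated (twinq_rel (myc_rel e t)) t.-1 (collapse a) (collapse b) =
  myc_rel (twinq_rel e) t a b.
Proof.
case: collapseP => [i ca _ | nca]; first by rewrite (isolated_rel b (collapsed_isolated ca)).
case: collapseP => [j cb _ | ncb].
  by rewrite myc_sym ?(isolated_rel a (collapsed_isolated cb)) //; exact: twinq_sym.
rewrite /= twinq_rel_cls; last exact: myc_sym.
by apply: myc_map_rel => A B; rewrite twinq_rel_rep.
Qed.

Variable z0 : T.
Hypotheses (z0_iso : isolated e z0) (t_ge1 : 1 <= t).

Lemma lift_twins_inj a b :
  ~~ collapsed a -> ~~ collapsed b -> twins (myc_rel e t) (lift a) (lift b) -> a = b.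
Proof.
case: a b => [[A s]|] [[B s']|] //= nca ncb tw.
- case: (myc_twins_inv t_ge1 tw) => [[iA iB] | [-> /rep_twins_eq -> //]].
  have AB := rep_twins_eq (isolated_twins iA iB); subst B.
  move: nca ncb (myc_twins_top tw); rewrite (isolated_rep e_sym) iA /= => nca ncb top.
  by have -> : s = s' by apply: val_inj; move: (ltn_ord s) (ltn_ord s') => /=; lia.
- by case/negP: (myc_hub_not_twin (rep A) s e_sym z0_iso); exact: twins_sym.
- by case/negP: (myc_hub_not_twin (rep B) s' e_sym z0_iso).
Qed.

Lemma collapse_inj : injective collapse.
Proof.
move=> a b; case: collapseP => [i ca ia | nca]; case: collapseP => [j cb jb | ncb] //.
- by case=> ij; apply: collapsed_level_inj; rewrite // -ia -jb ij.
- by case=> same_class; apply: lift_twins_inj => //; apply/cls_eq/val_inj.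
Qed.

(* Every twin class of mu_t(G) is hit; an isolated u_x^s (0 < s < t) is hit via u_[x]^0. *)
Lemma collapse_hits_class v : exists a, collapse a = inl (cls (myc_rel e t) v).
Proof.
case: v => [[x s]|]; last by exists None.
have lift_cls s' : cls _ (lift (Some (cls e x, s'))) = cls (myc_rel e t) (Some (x, s')).
  by apply/cls_eq/myc_twins_lift/twins_rep_cls.
case: (boolP (isolated e x && (0 < s < t))) => [/andP [ix /andP [_ st]] | nc].
- exists (Some (cls e x, ord0)); rewrite collapse_class ?lift_cls /= ?andbF //.
  by congr inl; apply/cls_eq/isolated_twins; apply: myc_isolated.
- by exists (Some (cls e x, s)); rewrite collapse_class ?lift_cls //= (isolated_cls e_sym).
Qed.

Lemma collapse_surj X : exists a, collapse a = X.
Proof.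
case: X => [X | i]; first by rewrite -(cls_rep X); exact: collapse_hits_class.
have it : i.+1 < t.+1 by have := ltn_ord i; lia.
exists (Some (cls e z0, inord i.+1)); case: collapseP => [j _ /= | /negP []].
  by rewrite inordK // => ji; congr inr; apply: val_inj.
by rewrite /= (isolated_cls e_sym) z0_iso inordK //=; have := ltn_ord i; lia.
Qed.

End Collapse.

Theorem mainTheorem5 (T : finType) (e : rel T) (e_sym : symmetric e) (e_irr : irreflexive e)
    (iso_v : exists x : T, forall y : T, ~~ e x y)
    (has_twins : exists x y : T, x != y /\ twins e x y)
    (t : nat) (t_ge1 : 1 <= t) :
  graph_iso (myc_rel (twinq_rel e) t)
            (add_isolated (twinq_rel (myc_rel e t)) t.-1).
Proof.
have [z0 /forallP z0_iso] := iso_v.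
exists (@collapse T e t); split; last exact: collapse_edges.
by apply: inj_surj_bij; [exact: collapse_inj z0_iso t_ge1 | exact: collapse_surj z0_iso t_ge1].
Qed.
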